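(* Let $x_0\in X$ be a regular point and let $u\ge0$ be a $p$-harmonic function on $\mathcal T(x_0)$. Then there exists a measure $\nu$ on $\Omega_{x_0}$ such that $$u(x)=\frac{1}{W(x)W(r(x))\cdots W(r^{n(x)-1}(x))}\,\nu\big(V_{r^{n(x)}(x),r^{n(x)-1}(x),\dots,x}\big),\qquad x\in\mathcal T(x_0).$$
   Context: $X$ is a compact metric space, $r:X\to X$ a finite-to-one, onto, Borel map, $m_0$ a Borel function with $\frac{1}{\#r^{-1}(x)}\sum_{r(y)=x}|m_0(y)|^2=1$, and $W(x)=|m_0(x)|^2/\#r^{-1}(r(x))$. A point $x_0$ is regular if the sets $r^{-n}(x_0)$, $n\in\mathbb N$, are mutually disjoint and no $r^{-n}(x_0)$, $n\ge0$, meets the zero set of $W$. $\mathcal T(x_0)=\bigcup_{n\ge0}r^{-n}(x_0)$; for $x\in\mathcal T(x_0)$, $n(x)$ is the unique $n\ge0$ with $r^n(x)=x_0$. A function $u$ on $\mathcal T(x_0)$ is $p$-harmonic if $u(x)=\sum_{r(y)=x}W(y)u(y)$ for all $x\in\mathcal T(x_0)$. $\Omega_{x_0}=\{(x_0,x_1,\dots):r(x_{n+1})=x_n\ \forall n\ge0\}$, with the product topology generated by the cylinders $V_{x_0,\dots,x_n}=\{(z_k)\in\Omega_{x_0}:z_0=x_0,\dots,z_n=x_n\}$; measures on $\Omega_{x_0}$ are Borel measures for this topology. *)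

From HB Require Import structures.
From mathcomp Require Import all_boot all_order all_algebra.
From mathcomp Require Import all_classical all_reals all_analysis.
From mathcomp Require Import complex finmap.

Unset Printing Implicit Defensive.

Import Order.TTheory GRing.Theory Num.Theory.
Import numFieldTopology.Exports.
Local Open Scope classical_set_scope.
Local Open Scope ring_scope.

Definition borel_set {T : topologicalType} : set (set T) :=
  <<s [set A : set T | open A] >>.

Definition borel_fun {T U : topologicalType} (f : T -> U) : Prop :=
  forall B : set U, borel_set B -> borel_set (f @^-1` B).

Definition abs2 {R : rcfType} (z : R[i]) : R :=
  (complex.Re z) ^+ 2 + (complex.Im z) ^+ 2.

(* #r^{-1}(x) (meaningful when r is finite-to-one) *)
Definition npre {X : choiceType} (r : X -> X) (x : X) : nat :=
  (#|` fset_set (r @^-1` [set x]) |)%fset.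

Definition Wfun {R : rcfType} {X : choiceType} (r : X -> X) (m0 : X -> R[i])
  (x : X) : R := abs2 (m0 x) / (npre r (r x))%:R.

Definition tree {X : Type} (r : X -> X) (x0 : X) : set X :=
  [set x | exists n : nat, iter n r x = x0].

Definition regular_point {R : rcfType} {X : choiceType} (r : X -> X)
  (m0 : X -> R[i]) (x0 : X) : Prop :=
  (forall m n : nat, (0 < m)%N -> (0 < n)%N -> m <> n ->
     [set x | iter m r x = x0] `&` [set x | iter n r x = x0] = set0)
  /\ (forall (n : nat) (x : X), iter n r x = x0 -> Wfun r m0 x <> 0).

Definition p_harmonic {R : rcfType} {X : choiceType} (r : X -> X)
  (m0 : X -> R[i]) (x0 : X) (u : X -> R) : Prop :=
  forall x, tree r x0 x ->
    u x = \sum_(y <- fset_set (r @^-1` [set x])) Wfun r m0 y * u y.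

Definition Omega_x0 {X : Type} (r : X -> X) (x0 : X) : Type :=
  {z : nat -> X | z 0%N = x0 /\ forall n, r (z n.+1) = z n}.

Definition cylV {X : Type} (r : X -> X) (x0 : X) (s : seq X) : set (Omega_x0 r x0) :=
  [set z | forall i : nat, (i < size s)%N -> proj1_sig z i = nth x0 s i].

(* Topology on Omega_x0 generated by the cylinders (which form a basis):
   open sets are the unions of cylinders. *)
Definition Omega_open {X : Type} (r : X -> X) (x0 : X) : set (set (Omega_x0 r x0)) :=
  [set A | exists C : set (seq X), A = \bigcup_(s in C) cylV r x0 s].

Definition Omega_borel {X : Type} (r : X -> X) (x0 : X) : set (set (Omega_x0 r x0)) :=
  <<s Omega_open r x0 >>.

Definition is_measure_on {R : realType} {T : Type} (S : set (set T))
  (mu : set T -> \bar R) : Prop :=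
  [/\ mu set0 = 0%E,
      (forall A, S A -> (0 <= mu A)%E) &
      (forall F : nat -> set T, (forall i, S (F i)) -> trivIset setT F ->
         (fun n => \sum_(0 <= i < n) mu (F i))%E @ \oo --> mu (\bigcup_n F n))].

From HB Require Import structures.
From mathcomp Require Import all_boot all_order all_algebra.
From mathcomp Require Import all_classical all_reals all_analysis.
From mathcomp Require Import complex finmap.
From mathcomp Require Import ring.

(* Each vertex x of the tree at level n is coded by a half-open interval of
   length u(x) W(x) W(r x) ... W(r^(n-1) x).  By harmonicity the intervals of
   the children of x tile the interval of x, so every t in [0, u(x0)) picks out
   a unique branch of nested intervals, i.e. a point of Omega_x0.  The measure
   nu is the image of Lebesgue measure on [0, u(x0)) under this coding, so the
   cylinder ending at x receives exactly the length of the interval of x. *)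

Set Implicit Arguments.
Unset Strict Implicit.
Unset Printing Implicit Defensive.

Import Order.TTheory GRing.Theory Num.Theory.
Import numFieldTopology.Exports.
Local Open Scope classical_set_scope.
Local Open Scope ring_scope.

Section PrefixSum.
Context {R : realDomainType} {T : eqType} (f : T -> R).

Definition psum (s : seq T) (j : nat) : R := \sum_(y <- take j s) f y.

Lemma psum0 s : psum s 0 = 0.
Proof. by rewrite /psum take0 big_nil. Qed.

Lemma psumS s j y0 : (j < size s)%N -> psum s j.+1 = psum s j + f (nth y0 s j).
Proof. by move=> hj; rewrite /psum (take_nth y0 hj) -cats1 big_cat big_seq1. Qed.

Lemma psum_size s : psum s (size s) = \sum_(y <- s) f y.
Proof. by rewrite /psum take_size. Qed.

Lemma psum_le s j k : (forall y, y \in s -> 0 <= f y) -> (j <= k)%N ->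
  psum s j <= psum s k.
Proof.
move=> f_ge0; elim: k => [|k IH]; first by rewrite leqn0 => /eqP ->.
rewrite leq_eqVlt => /orP [/eqP -> //|/IH jk]; apply: (le_trans jk).
have [ks|sk] := ltnP k (size s); last by rewrite /psum !take_oversize // ltnW.
have y0 : T by case: (s) ks => [|y0].
by rewrite (psumS y0 ks) lerDl f_ge0 ?mem_nth.
Qed.

Lemma psum_cover s t : 0 <= t < \sum_(y <- s) f y ->
  exists2 j, (j < size s)%N & psum s j <= t < psum s j.+1.
Proof.
elim: s t => [|y s IH] t.
  by rewrite big_nil => /andP [t_ge0 /(le_lt_trans t_ge0)]; rewrite ltxx.
rewrite big_cons => /andP [t_ge0 t_lt].
have [tfy|fyt] := ltP t (f y).
  by exists 0%N; rewrite // psum0 /psum /= big_cons take0 big_nil addr0 t_ge0.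
have [|j js] := IH (t - f y); first by rewrite subr_ge0 fyt ltrBlDl.
by exists j.+1; rewrite // /psum /= !big_cons -lerBrDl -ltrBlDl.
Qed.

End PrefixSum.

Section Paths.
Variables (X : Type) (r : X -> X) (x0 : X).

Definition trail (m k : nat) (x : X) : seq X := [seq iter (m - i) r x | i <- iota 0 k].

Lemma path_iter (z : Omega_x0 r x0) k i : sval z i = iter k r (sval z (i + k)%N).
Proof.
elim: k => [|k IH]; first by rewrite addn0.
by rewrite iterSr addnS (proj2 (proj2_sig z)).
Qed.

Lemma path_prefix (z : Omega_x0 r x0) k m : (k <= m.+1)%N ->
  [seq sval z i | i <- iota 0 k] = trail m k (sval z m).
Proof.
move=> km; apply/eq_in_map => i; rewrite mem_iota add0n => ik.
by rewrite (path_iter z (m - i)) subnKC // -ltnS (leq_trans ik).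
Qed.

Lemma cylV_prefix s (z : Omega_x0 r x0) :
  cylV r x0 s z <-> [seq sval z i | i <- iota 0 (size s)] = s.
Proof.
split=> [zs|<- i]; last by rewrite size_map size_iota => ilt;
  rewrite (nth_map 0%N) ?size_iota // nth_iota.
apply: (@eq_from_nth _ x0); first by rewrite size_map size_iota.
rewrite size_map size_iota => i ilt.
by rewrite (nth_map 0%N) ?size_iota // nth_iota // zs.
Qed.

End Paths.

Section IntervalCoding.
Variables (R : realType) (X : choiceType) (r : X -> X) (x0 : X) (w u : X -> R).
Hypothesis r_fin : forall x : X, finite_set (r @^-1` [set x]).
Hypothesis r_onto : forall x : X, exists y : X, r y = x.
Hypothesis w_ge0 : forall x, 0 <= w x.
Hypothesis u_ge0 : forall x, tree r x0 x -> 0 <= u x.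
Hypothesis u_harm : forall x, tree r x0 x ->
  u x = \sum_(y <- fset_set (r @^-1` [set x])) w y * u y.

Definition depth (n : nat) (x : X) : Prop := iter n r x = x0.

Definition mass (n : nat) (x : X) : R := u x * \prod_(k < n) w (iter k r x).

Definition children (x : X) : seq X := fset_set (r @^-1` [set x]).

(* The children of x are laid out left to right in the order of [children x]. *)
Fixpoint left_end (n : nat) (x : X) : R :=
  if n is n'.+1 then
    left_end n' (r x) + psum (mass n) (children (r x)) (index x (children (r x)))
  else 0.

Definition cell (n : nat) (x : X) : set R :=
  [set t | left_end n x <= t < left_end n x + mass n x].

Lemma depthS n y : depth n.+1 y = depth n (r y).
Proof. by rewrite /depth iterSr. Qed.

Lemma mem_children y x : (y \in children x) = (r y == x).
Proof.
by rewrite /children in_fset_set //; apply/idP/eqP => [|ry]; rewrite in_setE.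
Qed.

Lemma children_uniq x : uniq (children x).
Proof. exact: fset_uniq. Qed.

Lemma mass_ge0 n x : depth n x -> 0 <= mass n x.
Proof. by move=> nx; rewrite mulr_ge0 ?prodr_ge0 //; apply: u_ge0; exists n. Qed.

Lemma children_mass_ge0 n x : depth n x -> {in children x, forall y, 0 <= mass n.+1 y}.
Proof.
by move=> nx y; rewrite mem_children => /eqP ry; rewrite mass_ge0 // depthS ry.
Qed.

Lemma mass_children n x : depth n x -> mass n x = \sum_(y <- children x) mass n.+1 y.
Proof.
move=> nx; rewrite /mass (@u_harm x); last by exists n.
rewrite mulrC big_distrr /= big_seq [RHS]big_seq; apply: eq_bigr => y.
rewrite mem_children => /eqP ry; rewrite big_ord_recl /=.
under [in RHS]eq_bigr => k _ do rewrite add0n -iterS iterSr ry.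
ring.
Qed.

Lemma cell_child n x y t : r y = x -> cell n.+1 y t =
  (left_end n x + psum (mass n.+1) (children x) (index y (children x)) <= t <
   left_end n x + psum (mass n.+1) (children x) (index y (children x)).+1).
Proof.
move=> ry; have yx : y \in children x by rewrite mem_children ry.
by rewrite /cell /= ry (psumS _ y) ?index_mem // nth_index // addrA.
Qed.

Lemma cell_child_sub n x y : depth n x -> r y = x -> cell n.+1 y `<=` cell n x.
Proof.
move=> nx ry t; rewrite (cell_child _ t ry) => /andP [lo hi].
have yx : y \in children x by rewrite mem_children ry.
have kids_ge0 := children_mass_ge0 nx; apply/andP; split.
  by apply: le_trans lo; rewrite lerDl -(psum0 (mass n.+1) (children x)) psum_le.
apply: (lt_le_trans hi); rewrite lerD2l (mass_children nx) -psum_size.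
by rewrite psum_le // index_mem.
Qed.

Lemma cell_children_cover n x t : depth n x -> cell n x t ->
  exists2 y, r y = x & cell n.+1 y t.
Proof.
move=> nx /andP [lo hi].
have /psum_cover [j js /andP [jlo jhi]] :
    0 <= t - left_end n x < \sum_(y <- children x) mass n.+1 y.
  by rewrite subr_ge0 lo ltrBlDl -mass_children.
have /[dup] + : nth x0 (children x) j \in children x by exact: mem_nth.
rewrite {1}mem_children => /eqP ry yx; exists (nth x0 (children x) j) => //.
by rewrite (cell_child _ t ry) index_uniq ?children_uniq // -lerBrDl jlo -ltrBlDl.
Qed.

Lemma cell_siblings_disjoint n x y y' t : depth n x -> r y = x -> r y' = x ->
  cell n.+1 y t -> cell n.+1 y' t -> y = y'.
Proof.
move=> nx ry ry'; rewrite (cell_child _ t ry) (cell_child _ t ry').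
have yx : y \in children x by rewrite mem_children ry.
have y'x : y' \in children x by rewrite mem_children ry'.
have mono j k : (j < k)%N ->
    left_end n x + psum (mass n.+1) (children x) j.+1 <=
    left_end n x + psum (mass n.+1) (children x) k.
  by move=> jk; rewrite lerD2l psum_le //; exact: children_mass_ge0 nx.
move=> /andP [lo hi] /andP [lo' hi'].
case: (ltngtP (index y (children x)) (index y' (children x))) => [lt|lt|eq_idx].
- by have := lt_le_trans (le_lt_trans lo' hi) (mono _ _ lt); rewrite ltxx.
- by have := lt_le_trans (le_lt_trans lo hi') (mono _ _ lt); rewrite ltxx.
- by rewrite -(nth_index x0 yx) eq_idx nth_index.
Qed.

Lemma cell_sub_root n x : depth n x -> cell n x `<=` cell 0 x0.
Proof.
elim: n x => [x <- //|n IH x]; rewrite depthS => nx t xt.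
exact/(IH _ nx)/(cell_child_sub nx erefl).
Qed.

Lemma cell_disjoint n x x' t : depth n x -> depth n x' ->
  cell n x t -> cell n x' t -> x = x'.
Proof.
elim: n x x' => [x x'|n IH x x']; first by rewrite /depth /= => -> ->.
rewrite !depthS => nx nx' xt x't.
have rxx' : r x = r x'.
  exact: IH nx nx' (cell_child_sub nx erefl xt) (cell_child_sub nx' erefl x't).
by apply: (cell_siblings_disjoint nx erefl _ xt x't); rewrite rxx'.
Qed.

Lemma cell_itv n x : cell n x = [set` `[left_end n x, left_end n x + mass n x[].
Proof. by apply/seteqP; split => t; rewrite /= in_itv. Qed.

Lemma measurable_cell n x : measurable (cell n x).
Proof. by rewrite cell_itv; exact: measurable_itv. Qed.

Lemma lebesgue_measure_cell n x : depth n x ->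
  lebesgue_measure (cell n x) = (mass n x)%:E.
Proof.
move=> nx; have m_ge0 := mass_ge0 nx.
rewrite cell_itv lebesgue_measure_itv /= lte_fin ltrDl lt_def m_ge0 andbT.
have [->|] := eqVneq (mass n x) 0; first by rewrite addr0.
by rewrite -EFinB addrC addKr.
Qed.

Lemma depth_finite n : finite_set [set x | depth n x].
Proof.
elim: n => [|n IH].
  by have -> : [set x | depth 0 x] = [set x0] by apply/seteqP; split.
have -> : [set x | depth n.+1 x] = \bigcup_(y in [set x | depth n x]) r @^-1` [set y].
  by apply/seteqP; split => x /=; rewrite depthS; [exists (r x)|case=> y ? ->].
exact: bigcup_finite.
Qed.

(* Off the root cell the choice of child is arbitrary; surjectivity of r only
   serves to make the branch a genuine path of Omega_x0 for every t. *)
Lemma child_choice n x t : exists y, r y = x /\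
  ((exists2 y', r y' = x & cell n.+1 y' t) -> cell n.+1 y t).
Proof.
have [[y' ry' y't]|no_child] := pselect (exists2 y', r y' = x & cell n.+1 y' t).
  by exists y'.
by have [y ry] := r_onto x; exists y; split=> // /no_child.
Qed.

Definition pick_child n x t : X := sval (cid (child_choice n x t)).

Lemma r_pick_child n x t : r (pick_child n x t) = x.
Proof. exact: (svalP (cid (child_choice n x t))).1. Qed.

Lemma pick_child_cell n x t :
  (exists2 y, r y = x & cell n.+1 y t) -> cell n.+1 (pick_child n x t) t.
Proof. exact: (svalP (cid (child_choice n x t))).2. Qed.

Fixpoint branch (t : R) (n : nat) : X :=
  if n is n'.+1 then pick_child n' (branch t n') t else x0.

Lemma r_branch t n : r (branch t n.+1) = branch t n.
Proof. exact: r_pick_child. Qed.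

Definition path_of (t : R) : Omega_x0 r x0 :=
  exist _ (branch t) (conj erefl (r_branch t)).

Lemma branch_cell t n : cell 0 x0 t -> depth n (branch t n) /\ cell n (branch t n) t.
Proof.
move=> root_t; elim: n => [//|n [nb bt]]; split; first by rewrite depthS r_branch.
exact/pick_child_cell/cell_children_cover.
Qed.

Lemma branch_eq t n x : cell 0 x0 t -> depth n x -> branch t n = x <-> cell n x t.
Proof.
move=> /(branch_cell n) [nb bt] nx; split=> [<- //|xt].
exact: cell_disjoint nb nx bt xt.
Qed.

Lemma preimage_branch n (P : set X) :
  cell 0 x0 `&` [set t | P (branch t n)] =
  \bigcup_(x in [set x | depth n x] `&` P) cell n x.
Proof.
apply/seteqP; split=> t.
  by move=> [root_t Pb]; have [nb bt] := branch_cell n root_t; exists (branch t n).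
move=> [x [nx Px] xt]; have root_t := cell_sub_root nx xt.
by split=> //=; rewrite (branch_eq root_t nx).2.
Qed.

Lemma measurable_branch n (P : set X) :
  measurable (cell 0 x0 `&` [set t | P (branch t n)]).
Proof.
rewrite preimage_branch; apply: fin_bigcup_measurable.
  exact: finite_setIl (depth_finite n).
by move=> x _; exact: measurable_cell.
Qed.

Let root_preimage (A : set (Omega_x0 r x0)) : set R := cell 0 x0 `&` path_of @^-1` A.

Lemma measurable_root_preimage_open A :
  Omega_open r x0 A -> measurable (root_preimage A).
Proof.
case=> C ->.
have -> : root_preimage (\bigcup_(s in C) cylV r x0 s) =
    \bigcup_k (cell 0 x0 `&` [set t | C (trail r k k (branch t k))]).
  apply/seteqP; split=> t.
    move=> [root_t [s Cs /cylV_prefix st]]; exists (size s) => //; split=> //=.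
    by have := path_prefix (path_of t) (leqnSn (size s)); rewrite st => <-.
  move=> [k _ [root_t Ct]]; split=> //; exists (trail r k k (branch t k)) => //.
  by apply/cylV_prefix; rewrite size_map size_iota (path_prefix (path_of t) (leqnSn k)).
by apply: bigcupT_measurable => k; exact: (measurable_branch k (C \o trail r k k)).
Qed.

Lemma sigma_algebra_root_preimage :
  sigma_algebra setT [set A | measurable (root_preimage A)].
Proof.
split=> [|A mA|F mF] /=; rewrite /root_preimage.
- by rewrite preimage_set0 setI0.
- rewrite setTD -preimage_setC -setDE.
  have -> : cell 0 x0 `\` path_of @^-1` A =
            cell 0 x0 `\` (cell 0 x0 `&` path_of @^-1` A).
    by rewrite setDIr setDv set0U.
  by apply: measurableD => //; exact: measurable_cell.
- by rewrite preimage_bigcup setI_bigcupr; exact: bigcupT_measurable.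
Qed.

Lemma measurable_root_preimage A : Omega_borel r x0 A -> measurable (root_preimage A).
Proof.
exact: smallest_sub sigma_algebra_root_preimage measurable_root_preimage_open A.
Qed.

Lemma root_preimage_cylV n x : depth n x ->
  root_preimage (cylV r x0 (trail r n n.+1 x)) = cell n x.
Proof.
move=> nx; apply/seteqP; split=> t.
  move=> [root_t /cylV_prefix].
  rewrite size_map size_iota (path_prefix (path_of t) (leqnn n.+1)).
  move=> /(congr1 (nth x0 ^~ n)).
  rewrite !(nth_map 0%N) ?size_iota // nth_iota // subnn.
  by move/(branch_eq root_t nx).
move=> xt; have root_t := cell_sub_root nx xt; split=> //.
apply/cylV_prefix; rewrite size_map size_iota (path_prefix (path_of t) (leqnn n.+1)) /=.
by rewrite (branch_eq root_t nx).2.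
Qed.

Lemma exists_cylinder_measure : exists nu : set (Omega_x0 r x0) -> \bar R,
  is_measure_on (Omega_borel r x0) nu /\
  forall n x, depth n x -> nu (cylV r x0 (trail r n n.+1 x)) = (mass n x)%:E.
Proof.
exists (fun A => lebesgue_measure (root_preimage A)); split=> [|n x nx]; last first.
  by rewrite root_preimage_cylV // lebesgue_measure_cell.
split=> [|A _|F mF tF]; first by rewrite /root_preimage preimage_set0 setI0 measure0.
  exact: measure_ge0.
rewrite /root_preimage preimage_bigcup setI_bigcupr.
apply: measure_sigma_additive => [i|i j _ _ [t [[_ Fi] [_ Fj]]]].
  exact: measurable_root_preimage.
by apply: tF => //; exists (path_of t).
Qed.

End IntervalCoding.

Lemma Wfun_ge0 {R : rcfType} {X : choiceType} (r : X -> X) (m0 : X -> R[i]) x :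
  0 <= Wfun r m0 x.
Proof. by rewrite /Wfun /abs2 divr_ge0 // addr_ge0 // sqr_ge0. Qed.

Theorem theorem4p5 (R : realType) (X : pseudoMetricType R)
  (X_hausdorff : hausdorff_space X) (X_compact : compact [set: X])
  (r : X -> X)
  (r_fin : forall x : X, finite_set (r @^-1` [set x]))
  (r_onto : forall x : X, exists y : X, r y = x)
  (r_borel : borel_fun r)
  (m0 : X -> R[i])
  (m0_borel_Re : borel_fun (fun x => complex.Re (m0 x) : R))
  (m0_borel_Im : borel_fun (fun x => complex.Im (m0 x) : R))
  (m0_norm : forall x : X,
     (npre r x)%:R^-1 * \sum_(y <- fset_set (r @^-1` [set x])) abs2 (m0 y) = 1)
  (x0 : X) (x0_reg : regular_point r m0 x0)
  (u : X -> R)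
  (u_ge0 : forall x, tree r x0 x -> 0 <= u x)
  (u_harm : p_harmonic r m0 x0 u) :
  exists nu : set (Omega_x0 r x0) -> \bar R,
    is_measure_on (Omega_borel r x0) nu /\
    forall (x : X) (n : nat), iter n r x = x0 ->
      ((u x)%:E =
        ((\prod_(k < n) Wfun r m0 (iter k r x))^-1)%:E *
        nu (cylV r x0 [seq iter (n - i) r x | i <- iota 0 n.+1]))%E.
Proof.
have [nu [nu_measure nu_cylV]] :=
  exists_cylinder_measure r_fin r_onto (@Wfun_ge0 R X r m0) u_ge0 u_harm.
exists nu; split=> // x n nx.
have W_neq0 : \prod_(k < n) Wfun r m0 (iter k r x) != 0.
  apply/prodf_neq0 => k _; apply/eqP/(x0_reg.2 (n - k)%N).
  by rewrite -iterD subnK // ltnW.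
by rewrite (nu_cylV _ _ nx) /mass -EFinM mulrCA mulVf // mulr1.
Qed.
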